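(* Consider an ontological model with a finite set of ontic states $\Lambda=\{\lambda_1,\lambda_2,\dots\}$ reproducing the statistics of preparations $P_1,\dots,P_n$ and a set of binary measurements. Associate to each preparation the vector $\vec\mu_i=(\mu(\lambda_1|P_i),\mu(\lambda_2|P_i),\dots)$, and let $k$ be the affine dimension of $\{\vec\mu_i\}_{i=1}^n$. If the model is preparation noncontextual, then any tomographically complete set of (binary) measurements contains at least $k$ measurements.
   Context: Prepare-and-measure scenario: preparations $P_i$ and binary measurements $M$ (outcomes $\{0,1\}$) with empirical probabilities $P^e(k|P,M)$. A mixture is a probability distribution $Q$ on preparations. Two mixtures $Q,Q'$ are operationally equivalent with respect to a set of measurements $\mathcal M$ if $\sum_i Q(P_i)P^e(k|P_i,M)=\sum_i Q'(P_i)P^e(k|P_i,M)$ for all $M\in\mathcal M$ and $k$. A set $\mathcal M_C$ is tomographically complete if the statistics of every measurement are linear functions of the statistics of the measurements in $\mathcal M_C$ (the same functions for all preparations); operational equivalence is judged with respect to a tomographically complete set. An ontological model consists of ontic states $\Lambda$, distributions $\mu(\lambda|P)$ and response functions $P^t(k|\lambda,M)$ with $P^e(k|P,M)=\sum_\lambda\mu(\lambda|P)P^t(k|\lambda,M)$. It is preparation noncontextual if operationally equivalent mixtures $Q,Q'$ satisfy $\sum_i Q(P_i)\mu(\lambda|P_i)=\sum_i Q'(P_i)\mu(\lambda|P_i)$ for all $\lambda$. *)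

From HB Require Import structures.
From mathcomp Require Import all_boot all_order all_algebra.
Set Implicit Arguments. Unset Strict Implicit. Unset Printing Implicit Defensive.
Import Order.TTheory GRing.Theory Num.Theory.
Local Open Scope ring_scope.

(* Prepare-and-measure scenario with n.+1 preparations P_0..P_n, finite ontic
   state space Lambda = 'I_L, and an arbitrary collection [Meas] of binary
   measurements (outcomes k : bool, false = 0, true = 1).
   mu i l  = mu(lambda_l | P_i),   xi M k l = P^t(k | lambda_l, M). *)

Section Model.
Variables (R : realFieldType) (L n : nat) (Meas : Type).
Variables (mu : 'I_n.+1 -> 'I_L -> R) (xi : Meas -> bool -> 'I_L -> R).

Definition is_ontological_model : Prop :=
  (forall i l, 0 <= mu i l) /\ (forall i, \sum_(l < L) mu i l = 1) /\
  (forall M k l, 0 <= xi M k l) /\ (forall M l, xi M false l + xi M true l = 1).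

Definition Pe (i : 'I_n.+1) (M : Meas) (k : bool) : R :=
  \sum_(l < L) mu i l * xi M k l.

Definition is_mixture (Q : 'I_n.+1 -> R) : Prop :=
  (forall i, 0 <= Q i) /\ \sum_(i < n.+1) Q i = 1.

Definition op_equiv (Q Q' : 'I_n.+1 -> R) : Prop :=
  forall M k, \sum_(i < n.+1) Q i * Pe i M k = \sum_(i < n.+1) Q' i * Pe i M k.

Definition prep_noncontextual : Prop :=
  forall Q Q', is_mixture Q -> is_mixture Q' -> op_equiv Q Q' ->
    forall l, \sum_(i < n.+1) Q i * mu i l = \sum_(i < n.+1) Q' i * mu i l.

Definition tomographically_complete (m : nat) (s : 'I_m -> Meas) : Prop :=
  forall M k, exists c : 'I_m -> bool -> R,
    forall i, Pe i M k = \sum_(j < m) \sum_(k' : bool) c j k' * Pe i (s j) k'.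

Definition affine_dim : nat :=
  \rank (\matrix_(i < n.+1, l < L) (mu i l - mu ord0 l)).

End Model.

From HB Require Import structures.
From mathcomp Require Import all_boot all_order all_algebra ring lra zify.
Import Order.TTheory GRing.Theory Num.Theory.
Local Open Scope ring_scope.

(* Every zero-sum weighting w of the preparations is a positive multiple of the
   difference of two mixtures. If w also annihilates the outcome-1 statistics of
   a tomographically complete family, it annihilates the outcome-0 statistics
   (they sum to 1) and hence the statistics of every measurement, so the two
   mixtures are operationally equivalent and, by preparation noncontextuality,
   w annihilates the ontic distributions mu_i. Hence every left kernel vector of
   the n+1 by m matrix of statistics differences is a left kernel vector of the
   matrix of differences mu_i - mu_0, and the rank of the latter, the affine
   dimension, is at most m. *)

Lemma zero_sum_mixture_diff {R : realFieldType} {n : nat} (w : 'I_n.+1 -> R) :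
  \sum_i w i = 0 ->
  exists Q Q' (c : R),
    [/\ is_mixture Q, is_mixture Q', 0 < c & forall i, Q i - Q' i = c * w i].
Proof.
move=> w0.
(* The offset 1 keeps the normaliser positive even when w = 0. *)
pose S : R := \sum_i (`|w i| + 1).
have S_gt0 : 0 < S.
  by rewrite /S big_split sumr_const card_ord ltr_wpDl ?sumr_ge0 // ltr0Sn.
pose mix (v : 'I_n.+1 -> R) i := S^-1 * (`|w i| + v i + 1).
have mixP v : \sum_i v i = 0 -> (forall i, `|v i| = `|w i|) -> is_mixture (mix v).
  move=> v0 vw; split=> [i|].
    rewrite mulr_ge0 ?invr_ge0 ?(ltW S_gt0) //.
    by have := ler_norm (- v i); rewrite normrN vw => ?; lra.
  rewrite /mix -mulr_sumr (eq_bigr _ (fun i _ => addrAC _ _ _)) big_split /=.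
  by rewrite v0 addr0 mulVf ?gt_eqF.
exists (mix w), (mix (fun i => - w i)), (S^-1 *+ 2); split.
- exact: mixP.
- by apply: mixP => [|i]; rewrite ?sumrN ?w0 ?oppr0 ?normrN.
- by rewrite pmulrn_lgt0 // invr_gt0.
- by move=> i; rewrite /mix; ring.
Qed.

Section ZeroSumShift.
Context {R : pzRingType} {n : nat}.

Definition zero_sum_shift (v : 'I_n.+1 -> R) i :=
  v i - (i == ord0)%:R * \sum_j v j.

Lemma sum_mul_zero_sum_shift (v x : 'I_n.+1 -> R) :
  \sum_i zero_sum_shift v i * x i = \sum_i v i * (x i - x ord0).
Proof.
under eq_bigr do rewrite mulrBl.
rewrite sumrB [X in _ - X](bigD1 ord0) //= [X in _ * _ * _ + X]big1 ?addr0.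
  under [RHS]eq_bigr do rewrite mulrBr.
  by rewrite sumrB mul1r -mulr_suml.
by move=> i /negbTE ->; rewrite !mul0r.
Qed.

Lemma sum_zero_sum_shift (v : 'I_n.+1 -> R) : \sum_i zero_sum_shift v i = 0.
Proof.
under eq_bigr do rewrite -[zero_sum_shift _ _]mulr1.
by rewrite (sum_mul_zero_sum_shift v (fun _ => 1)) big1 // => i _; rewrite subrr mulr0.
Qed.

Definition diff0_mx {m} (x : 'I_n.+1 -> 'I_m -> R) :=
  \matrix_(i < n.+1, j < m) (x i j - x ord0 j).

Lemma mulmx_diff0_mxE m (u : 'rV_n.+1) (x : 'I_n.+1 -> 'I_m -> R) j :
  (u *m diff0_mx x) 0 j = \sum_i zero_sum_shift (u 0) i * x i j.
Proof.
by rewrite sum_mul_zero_sum_shift mxE; apply: eq_bigr => i _; rewrite mxE.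
Qed.

End ZeroSumShift.

Lemma mxrank_leq_of_left_ker {F : fieldType} {m n1 n2 : nat}
    (A : 'M[F]_(m, n1)) (B : 'M[F]_(m, n2)) :
  (forall u : 'rV_m, u *m A = 0 -> u *m B = 0) -> (\rank B <= \rank A)%N.
Proof.
move=> AB.
have kerAB : (kermx A <= kermx B)%MS.
  by apply/row_subP => i; apply/sub_kermxP/AB/sub_kermxP/row_sub.
have := mxrankS kerAB; rewrite !mxrank_ker.
have := rank_leq_row A; have := rank_leq_row B; lia.
Qed.

Section OntologicalModel.
Context {R : realFieldType} {L n : nat} {Meas : Type}.
Context {mu : 'I_n.+1 -> 'I_L -> R} {xi : Meas -> bool -> 'I_L -> R}.

Lemma Pe_false : is_ontological_model mu xi ->
  forall i M, Pe mu xi i M false = 1 - Pe mu xi i M true.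
Proof.
move=> [_ [mu1 [_ xi1]]] i M; apply/eqP.
rewrite eq_sym subr_eq -(mu1 i) /Pe -big_split /=; apply/eqP.
by apply: eq_bigr => l _; rewrite -mulrDr xi1 mulr1.
Qed.

Lemma noncontextual_zero_sum_annihilator : prep_noncontextual mu xi ->
  forall w : 'I_n.+1 -> R, \sum_i w i = 0 ->
  (forall M k, \sum_i w i * Pe mu xi i M k = 0) ->
  forall l, \sum_i w i * mu i l = 0.
Proof.
move=> pnc w w0 wPe l.
have [Q [Q' [c [mixQ mixQ' c_gt0 QQ']]]] := zero_sum_mixture_diff w w0.
have sumBE (x : 'I_n.+1 -> R) :
    \sum_i Q i * x i - \sum_i Q' i * x i = c * \sum_i w i * x i.
  by rewrite -sumrB mulr_sumr; apply: eq_bigr => i _; rewrite -mulrBl QQ' mulrA.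
have QQ'_equiv : op_equiv mu xi Q Q'.
  by move=> M k; apply/eqP; rewrite -subr_eq0 sumBE wPe mulr0.
have /eqP := pnc Q Q' mixQ mixQ' QQ'_equiv l.
by rewrite -subr_eq0 sumBE mulf_eq0 gt_eqF // => /eqP.
Qed.

Lemma tomographic_zero_sum_annihilator {m} {s : 'I_m -> Meas} :
  is_ontological_model mu xi -> prep_noncontextual mu xi ->
  tomographically_complete mu xi s ->
  forall w : 'I_n.+1 -> R, \sum_i w i = 0 ->
  (forall j, \sum_i w i * Pe mu xi i (s j) true = 0) ->
  forall l, \sum_i w i * mu i l = 0.
Proof.
move=> model pnc tc w w0 wPe1.
apply: noncontextual_zero_sum_annihilator => // M k.
have wPe j k' : \sum_i w i * Pe mu xi i (s j) k' = 0.
  case: k'; first exact: wPe1.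
  under eq_bigr do rewrite Pe_false // mulrBr mulr1.
  by rewrite sumrB w0 wPe1 subrr.
have [c Pe_lin] := tc M k.
under eq_bigr do rewrite Pe_lin mulr_sumr.
rewrite exchange_big big1 // => j _.
under eq_bigr do rewrite mulr_sumr.
rewrite exchange_big big1 // => k' _.
under eq_bigr do rewrite mulrCA.
by rewrite -mulr_sumr wPe mulr0.
Qed.

End OntologicalModel.

Theorem lemma3 (R : realFieldType) (L n : nat) (Meas : Type)
    (mu : 'I_n.+1 -> 'I_L -> R) (xi : Meas -> bool -> 'I_L -> R) :
  is_ontological_model mu xi ->
  prep_noncontextual mu xi ->
  forall (m : nat) (s : 'I_m -> Meas), injective s ->
  tomographically_complete mu xi s ->
  (affine_dim mu <= m)%N.
Proof.
move=> model pnc m s _ tc.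
pose stats := diff0_mx (fun i j => Pe mu xi i (s j) true).
apply: leq_trans (rank_leq_col stats).
apply: (mxrank_leq_of_left_ker stats (diff0_mx mu)) => u /rowP u_stats.
apply/rowP => l; rewrite mulmx_diff0_mxE mxE.
apply: (tomographic_zero_sum_annihilator model pnc tc).
  exact: sum_zero_sum_shift.
by move=> j; have := u_stats j; rewrite mulmx_diff0_mxE mxE.
Qed.
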